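(* Let $G$ be a graph without isolated vertices and $T$ a solution counting decision tree for $\varphi(G)$. Let $u$ be a node of $T$ labelled by a variable $x$ that is not forced to $1$ by $A_u$. Then the weight of the outgoing edge of $u$ labelled $\neg x$ is between $(1/2)^{|N^u(x)|+1}$ and $1/2$, and the weight of the outgoing edge of $u$ labelled $x$ is between $1/2$ and $1-(1/2)^{|N^u(x)|+1}$.
   Context: $\varphi(G)$ is the CNF on variables $V(G)$ with clauses $(u\vee v)$ for $\{u,v\}\in E(G)$. Boolean functions are identified with their sets of satisfying assignments (sets of literals); $F|_S$ is the function on the remaining variables whose satisfying assignments are the $S'$ with $S\cup S'$ satisfying $F$; $|\cdot|$ counts satisfying assignments. Decision tree for $F$ (not constant false): root labelled by some $x\in Var(F)$; for each literal $\ell\in\{x,\neg x\}$ occurring in some satisfying assignment, an outgoing edge labelled $\ell$ whose head is a leaf if $|Var(F)|=1$ and otherwise the root of a decision tree for $F|_\ell$. A solution counting decision tree additionally gives the edge leaving node $w$ with label $\ell$ the weight $|F|_{A_w\cup\{\ell\}}|/|F|_{A_w}|$, where $A_w$ is the set of literals labelling the root-$w$ path. A variable $y$ is forced to $1$ by $A_u$ if some neighbour $z$ of $y$ in $G$ has $\neg z\in A_u$. $N^u(y)$ is the set of neighbours $z$ of $y$ that do not occur in $A_u$ and are not forced to $1$ by $A_u$. *)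

From mathcomp Require Import all_boot all_order all_algebra.
Set Implicit Arguments. Unset Strict Implicit. Unset Printing Implicit Defensive.
Import GRing.Theory Num.Theory.

Section Defs.
Variable V : finType.

(* A literal (v, b) means "variable v has value b": (v,true) = v, (v,false) = ~v. *)
Definition lit := (V * bool)%type.

Definition sat_phi (e : rel V) (s : {ffun V -> bool}) : bool :=
  [forall u, forall v, e u v ==> (s u || s v)].

(* |phi(G)|_A| : number of satisfying assignments of the restriction to the
   literal set A, i.e. total satisfying assignments of phi(G) extending A. *)
Definition cnt (e : rel V) (A : seq lit) : nat :=
  #|[set s : {ffun V -> bool} | sat_phi e s && all (fun l => s l.1 == l.2) A]|.

Definition vars (A : seq lit) : seq V := map fst A.

Definition nrem (A : seq lit) : nat := #|[set v : V | v \notin vars A]|.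

(* Decision trees: a node carries its variable, the child along the edge
   labelled ~x and the child along the edge labelled x (None = no edge). *)
Inductive dtree : Type :=
| Leaf
| Node of V & option dtree & option dtree.

Definition child (c0 c1 : option dtree) (b : bool) : option dtree :=
  if b then c1 else c0.

(* dt_wf e A t : t is a decision tree for phi(G)|_A, where A is the set of
   literals labelling the root-path (listed from the root). *)
Fixpoint dt_wf (e : rel V) (A : seq lit) (t : dtree) : Prop :=
  match t with
  | Leaf => False
  | Node x c0 c1 =>
      0 < cnt e A /\ x \notin vars A /\
      (forall b : bool,
         match child c0 c1 b with
         | None => cnt e (rcons A (x, b)) = 0
         | Some t' => 0 < cnt e (rcons A (x, b)) /\
             (if nrem A == 1 then t' = Leaf
              else dt_wf e (rcons A (x, b)) t')
         end)
  end.

(* at_node t P x : following path P (literals, from the root) in t reaches an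
   internal node labelled by x; then A_u = P. *)
Fixpoint at_node (t : dtree) (P : seq lit) (x : V) : Prop :=
  match P with
  | [::] => exists c0 c1, t = Node x c0 c1
  | (y, b) :: P' => exists c0 c1 t', t = Node y c0 c1 /\
       child c0 c1 b = Some t' /\ at_node t' P' x
  end.

Definition weight (e : rel V) (A : seq lit) (l : lit) : rat :=
  (cnt e (rcons A l))%:R / (cnt e A)%:R.

Definition forced1 (e : rel V) (A : seq lit) (y : V) : bool :=
  [exists z, e y z && ((z, false) \in A)].

Definition Nu (e : rel V) (A : seq lit) (y : V) : {set V} :=
  [set z | e y z & (z \notin vars A) && ~~ forced1 e A z].

End Defs.

From mathcomp Require Import all_boot all_order all_algebra.
From mathcomp Require Import lra zify.
Import GRing.Theory Num.Theory.

Set Implicit Arguments.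
Unset Strict Implicit.
Unset Printing Implicit Defensive.

(* Split the solutions extending A according to the value of x, with counts
   c0 and c1; the weights are c0 / (c0 + c1) and c1 / (c0 + c1).  Since
   phi(G) is monotone, setting x to 1 maps the x = 0 solutions injectively
   into the x = 1 solutions, so c0 <= c1.  Conversely, a solution with x = 1
   stays a solution when x is set to 0 and its neighbours to 1; the
   neighbours outside N^u(x) were already 1 (fixed by A, which cannot set
   them to 0 as x is not forced, or forced to 1 by A), so the original is
   recovered from the image together with its values on N^u(x), whence
   c1 <= 2^|N^u(x)| c0. *)

Section DecisionTree.
Variables (V : finType) (e : rel V).

Lemma at_node_Leaf P (x : V) : ~ at_node (Leaf V) P x.
Proof. by case: P => [|[y b] P] /=; [case=> ? [] | case=> ? [] ? [] ? []]. Qed.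

Lemma dt_wf_at_node P : forall (t : dtree V) B x,
  dt_wf e B t -> at_node t P x -> 0 < cnt e (B ++ P) /\ x \notin vars (B ++ P).
Proof.
elim: P => [|[y b] P IH] t B x /=.
  by move=> wf_t [c0 [c1 t_eq]]; move: wf_t; rewrite t_eq cats0 => -[? [? _]].
move=> wf_t [c0 [c1 [t' [t_eq [child_b at_t']]]]]; move: wf_t.
rewrite t_eq => -[_ [_ /(_ b)]]; rewrite child_b => -[_].
case: (nrem B == 1) => [t'_Leaf | wf_t'].
  by move: at_t'; rewrite t'_Leaf => /at_node_Leaf.
by rewrite -cat_rcons; apply: IH wf_t' at_t'.
Qed.

End DecisionTree.

Section Counting.
Variables (V : finType) (e : rel V).
Implicit Types (s t : {ffun V -> bool}) (A : seq (lit V)).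

Definition agrees s A := all (fun l => s l.1 == l.2) A.

Definition sols A := [set s : {ffun V -> bool} | sat_phi e s && agrees s A].

Lemma sols_rcons A x b :
  sols (rcons A (x, b)) = sols A :&: [set s : {ffun V -> bool} | s x == b].
Proof.
by apply/setP => s; rewrite !inE /agrees all_rcons /=; case: (s x == b); rewrite ?andbT ?andbF.
Qed.

Lemma cnt_rcons_split A x :
  cnt e A = (cnt e (rcons A (x, false)) + cnt e (rcons A (x, true)))%N.
Proof.
rewrite /cnt -!/(sols _) !sols_rcons -(cardsID [set s : {ffun V -> bool} | s x] (sols A)) addnC.
by congr (_ + _)%N; apply: eq_card => s; rewrite !inE; case: (s x); rewrite ?andbT ?andbF.
Qed.

Lemma sat_phi_mono s t : (forall v, s v ==> t v) -> sat_phi e s -> sat_phi e t.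
Proof.
move=> le_st /forallP sat_s; apply/forallP => u; apply/forallP => v.
apply/implyP => /(implyP (forallP (sat_s u) v)).
by have := le_st u; have := le_st v; do 2 case: (s _); case: (t u); case: (t v).
Qed.

Lemma agrees_eq_on s t A : {in vars A, s =1 t} -> agrees s A = agrees t A.
Proof.
move=> eq_st; apply: eq_in_all => l l_A.
by rewrite eq_st //; apply: map_f.
Qed.

Lemma agrees_forced s A y : sat_phi e s -> agrees s A -> forced1 e A y -> s y.
Proof.
move=> /forallP sat_s /allP agr /existsP[z /andP[e_yz z0_A]].
move: (forallP (sat_s y) z) (agr _ z0_A) => /implyP/(_ e_yz).
by move=> /orP[// | sz] /eqP/= s_z; rewrite s_z in sz.
Qed.

Section FreshVariable.
Variables (A : seq (lit V)) (x : V).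
Hypothesis x_fresh : x \notin vars A.

Definition set_true s := [ffun v => (v == x) || s v].

Lemma cnt_false_le_true :
  (cnt e (rcons A (x, false)) <= cnt e (rcons A (x, true)))%N.
Proof.
rewrite /cnt -!/(sols _) -(@card_in_imset _ _ set_true); last first.
  move=> s t; rewrite !sols_rcons !inE => /andP[_ /eqP s_x] /andP[_ /eqP t_x] eq_st.
  apply/ffunP => v; move/ffunP/(_ v): eq_st; rewrite !ffunE.
  by case: (v =P x) => [vx | _]; rewrite ?vx ?s_x ?t_x.
apply: subset_leq_card; apply/subsetP => _ /imsetP[s + ->].
rewrite !sols_rcons !inE ffunE eqxx andbT => /andP[/andP[sat_s agr_s] _].
rewrite (sat_phi_mono _ sat_s) => [|v]; last by rewrite ffunE implybE orbCA orNb orbT.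
rewrite /= (@agrees_eq_on _ s) // => v v_A; rewrite ffunE.
by case: (v =P x) v_A => // ->; rewrite (negbTE x_fresh).
Qed.

Hypothesis e_sym : symmetric e.
Hypothesis e_irr : irreflexive e.
Hypothesis x_unforced : ~~ forced1 e A x.

Definition isolate s := [ffun v => if v == x then false else e x v || s v].

Lemma sat_phi_isolate s : sat_phi e s -> sat_phi e (isolate s).
Proof.
move=> sat_s; apply/forallP => u; apply/forallP => v; apply/implyP => e_uv.
move: (implyP (forallP (forallP sat_s u) v) e_uv); rewrite !ffunE.
case: (u =P x) => [ux | _]; case: (v =P x) => [vx | _] //=.
- by move: e_uv; rewrite ux vx e_irr.
- by rewrite -ux e_uv.
- by rewrite -vx e_sym e_uv.
- by case/orP => ->; rewrite !orbT.
Qed.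

Lemma lit_neighbour_true z b : (z, b) \in A -> e x z -> b.
Proof.
case: b => // z0_A e_xz; move/negP: x_unforced; case.
by apply/existsP; exists z; rewrite e_xz z0_A.
Qed.

Lemma agrees_isolate s : agrees s A -> agrees (isolate s) A.
Proof.
move=> agr_s; rewrite (@agrees_eq_on _ s) // => v /mapP[[z b] zb_A ->] /=.
have := allP agr_s _ zb_A; rewrite ffunE /= => /eqP s_z.
case: (z =P x) => [zx | _]; first by case/negP: x_fresh; rewrite -zx; apply: map_f zb_A.
by case e_xz: (e x z) => //=; rewrite s_z (lit_neighbour_true zb_A e_xz).
Qed.

Lemma neighbour_outside_Nu s v : s \in sols A -> e x v -> v \notin Nu e A x -> s v.
Proof.
rewrite inE => /andP[sat_s agr_s] e_xv; rewrite inE e_xv andTb negb_and !negbK.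
case/orP => [/mapP[[z b] zb_A /= v_z] | ]; last exact: agrees_forced.
subst v; move: (allP agr_s _ zb_A) => /eqP/= ->; exact: lit_neighbour_true zb_A e_xv.
Qed.

Lemma cnt_true_le_false :
  (cnt e (rcons A (x, true)) <= 2 ^ #|Nu e A x| * cnt e (rcons A (x, false)))%N.
Proof.
pose code s := (isolate s, Nu e A x :&: [set z | s z]).
rewrite /cnt -!/(sols _) -(@card_in_imset _ _ code); last first.
  move=> s t; rewrite !sols_rcons => /setIP[s_A s_x] /setIP[t_A t_x].
  case=> /ffunP eq_iso /setP eq_Nu; apply/ffunP => v.
  move: s_x t_x; rewrite !inE => /eqP s_x /eqP t_x.
  case: (v =P x) => [-> | vx]; first by rewrite s_x t_x.
  have := eq_iso v; rewrite !ffunE; move/eqP/negbTE: vx => -> /=.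
  case e_xv: (e x v) => //= _.
  case Nu_v: (v \in Nu e A x); first by move: (eq_Nu v) => /=; rewrite !in_setI Nu_v !inE.
  by rewrite !(neighbour_outside_Nu _ e_xv (negbT Nu_v)).
rewrite mulnC -card_powerset -cardsX; apply: subset_leq_card; apply/subsetP.
move=> _ /imsetP[s + ->]; rewrite !sols_rcons !inE /= => /andP[/andP[sat_s agr_s] _].
by rewrite sat_phi_isolate // agrees_isolate // ffunE eqxx subsetIl.
Qed.

End FreshVariable.
End Counting.

Local Open Scope ring_scope.

Lemma ratio_bounds (R : realFieldType) (c0 c1 n : nat) :
  (0 < c0 + c1)%N -> (c0 <= c1)%N -> (c1 <= 2 ^ n * c0)%N ->
  (1 / 2) ^+ n.+1 <= (c0%:R / (c0 + c1)%N%:R : R) <= 1 / 2.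
Proof.
move=> pos le01 le10; have N_gt0 : (0 : R) < (c0 + c1)%N%:R by rewrite ltr0n.
have -> : (1 / 2 : R) ^+ n.+1 = ((2 ^ n.+1)%N%:R)^-1 by rewrite natrX div1r exprVn.
apply/andP; split.
  rewrite ler_pdivlMr // mulrC ler_pdivrMr ?ltr0n ?expn_gt0 // -natrM ler_nat.
  by have := expn_gt0 2 n; rewrite expnS; lia.
have le01_R : c0%:R <= c1%:R :> R by rewrite ler_nat.
rewrite ler_pdivrMr // natrD; lra.
Qed.

Lemma weight_true_compl (V : finType) (e : rel V) A (x : V) : (0 < cnt e A)%N ->
  weight e A (x, true) = 1 - weight e A (x, false).
Proof.
move=> cnt_gt0; have cnt_neq0 : (cnt e A)%:R != 0 :> rat by rewrite pnatr_eq0 -lt0n.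
apply: (mulIf cnt_neq0); rewrite /weight mulrBl mul1r !mulfVK //.
by rewrite (cnt_rcons_split e A x) natrD; lra.
Qed.

Theorem lemma11 (V : finType) (e : rel V)
  (e_sym : symmetric e) (e_irr : irreflexive e)
  (no_isolated : forall v : V, exists w : V, e v w)
  (T : dtree V) (HT : dt_wf e [::] T)
  (A : seq (lit V)) (x : V) (Hu : at_node T A x)
  (Hx : ~~ forced1 e A x) :
  ((1 / 2) ^+ (#|Nu e A x|.+1) <= weight e A (x, false) <= 1 / 2) /\
  (1 / 2 <= weight e A (x, true) <= 1 - (1 / 2) ^+ (#|Nu e A x|.+1)).
Proof.
have [cnt_gt0 x_fresh] := dt_wf_at_node HT Hu; rewrite cat0s in cnt_gt0 x_fresh.
have /andP[lo hi] : (1 / 2) ^+ #|Nu e A x|.+1 <= weight e A (x, false) <= 1 / 2.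
  rewrite /weight (cnt_rcons_split e A x); apply: ratio_bounds.
  - by rewrite -cnt_rcons_split.
  - exact: cnt_false_le_true.
  - exact: cnt_true_le_false.
by rewrite weight_true_compl //; split; apply/andP; split; lra.
Qed.
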